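(* For any connected graphs $G$ and $H$, $$\mu_t(G\,\Box\,H)\le \min\{(n(G)-|\mathcal{P}(G)|)\,\mu_t(H),\ (n(H)-|\mathcal{P}(H)|)\,\mu_t(G)\}.$$
   Context: All graphs are finite, simple and undirected; $n(G)$ denotes the order of $G$ and $N_G[v]$ the closed neighborhood of $v$. The Cartesian product $G\,\Box\,H$ has vertex set $V(G)\times V(H)$, with $(x,y)$ adjacent to $(x',y')$ iff either $x=x'$ and $yy'\in E(H)$, or $xx'\in E(G)$ and $y=y'$. Let $F$ be a connected graph and $X\subseteq V(F)$. Two vertices $x,y\in V(F)$ are $X$-visible if there exists a shortest $x,y$-path in $F$ none of whose internal vertices belongs to $X$. $X$ is a total mutual-visibility set of $F$ if every two vertices of $F$ are $X$-visible (the empty set is allowed). $\mu_t(F)$ is the maximum cardinality of a total mutual-visibility set of $F$. $\mathcal{P}(F)$ is the set of vertices $v$ of $F$ for which there exist two distinct vertices $u,w\in V(F)$ with $N_F[u]\cap N_F[w]=\{v\}$. *)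

From mathcomp Require Import all_boot.
From Stdlib Require Import ClassicalEpsilon.
Set Implicit Arguments. Unset Strict Implicit. Unset Printing Implicit Defensive.

Section Graphs.
Variable T : finType.
Variable e : rel T.

Definition simple_graph : Prop := symmetric e /\ irreflexive e.

Definition connected_graph : Prop := forall x y : T, connect e x y.

(* A walk x :: p from x to y; its length is size p. *)
Definition is_walk (x y : T) (p : seq T) : bool := path e x p && (last x p == y).

Definition is_shortest (x y : T) (p : seq T) : Prop :=
  is_walk x y p /\ forall q, is_walk x y q -> size p <= size q.

Definition internal (x : T) (p : seq T) : seq T := behead (belast x p).

Definition X_visible (X : {set T}) (x y : T) : Prop :=
  exists p, is_shortest x y p /\ all (fun v => v \notin X) (internal x p).

Definition total_mv_set (X : {set T}) : Prop := forall x y : T, X_visible X x y.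

Definition total_mv_setb (X : {set T}) : bool :=
  if excluded_middle_informative (total_mv_set X) then true else false.

Definition mu_t : nat := \max_(X : {set T} | total_mv_setb X) #|X|.

Definition cnbhd (v : T) : {set T} := [set x | (x == v) || e v x].

Definition Pset : {set T} :=
  [set v | [exists u, exists w, (u != w) && (cnbhd u :&: cnbhd w == [set v])]].

End Graphs.

Definition box_rel (T1 T2 : finType) (e1 : rel T1) (e2 : rel T2) : rel (T1 * T2) :=
  fun x y => ((x.1 == y.1) && e2 x.2 y.2) || (e1 x.1 y.1 && (x.2 == y.2)).

From mathcomp Require Import all_boot.
From Stdlib Require Import ClassicalEpsilon.
Set Implicit Arguments. Unset Strict Implicit. Unset Printing Implicit Defensive.

(* Let X be a total mutual-visibility set of G □ H and, for a vertex a of G,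
   let the fiber X_a = {h | (a,h) ∈ X}.
   1. Every fiber X_a is a total mutual-visibility set of H: a shortest path
      in G □ H between two vertices of the H-layer {a} × H stays in that layer
      (leaving it costs two extra G-steps), so it projects to a shortest path
      of H avoiding X_a internally.  Hence |X_a| ≤ μ_t(H).
   2. If a ∈ P(G), witnessed by u ≠ w with N[u] ∩ N[w] = {a}, then u and w are
      at distance 2 and a is their only common neighbour; hence every shortest
      (u,h),(w,h)-path of G □ H is u,a,w lifted to layer h, so (a,h) ∉ X.
   Summing |X_a| over a ∉ P(G) gives |X| ≤ (n(G) - |P(G)|) μ_t(H).  The second
   bound follows from the first since G □ H ≅ H □ G and μ_t is invariant under
   isomorphism. *)

Lemma mu_t_ge (T : finType) (e : rel T) (X : {set T}) :
  total_mv_set e X -> #|X| <= mu_t e.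
Proof.
move=> mvX; apply: (leq_bigmax_cond (F := fun X : {set T} => #|X|)).
by rewrite /total_mv_setb; case: excluded_middle_informative.
Qed.

Lemma mu_t_le (T : finType) (e : rel T) (m : nat) :
  (forall X : {set T}, total_mv_set e X -> #|X| <= m) -> mu_t e <= m.
Proof.
move=> bound; apply/bigmax_leqP => X.
by rewrite /total_mv_setb; case: excluded_middle_informative => // mvX _; apply: bound.
Qed.

Section Isomorphism.
Variables (T T' : finType) (e : rel T) (e' : rel T') (f : T -> T') (g : T' -> T).
Hypotheses (fK : cancel f g) (gK : cancel g f).
Hypothesis f_edge : forall x y, e' (f x) (f y) = e x y.

Lemma iso_total_mv (X : {set T}) : total_mv_set e X -> total_mv_set e' (f @: X).
Proof.
move=> mvX x' y'.
case: (mvX (g x') (g y')) => p [[/andP [p_path /eqP p_last] p_min] p_int].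
have e_g a b : e' a b = e (g a) (g b) by rewrite -f_edge !gK.
exists (map f p); split; [split|].
- rewrite /is_walk -(gK x') path_map last_map p_last gK eqxx andbT.
  by rewrite (eq_path (e' := e)) // => a b /=; rewrite f_edge.
- move=> q /andP [q_path /eqP q_last]; rewrite size_map -(size_map g).
  apply: p_min; rewrite /is_walk path_map last_map q_last eqxx andbT.
  by rewrite -(eq_path e_g).
- rewrite /internal -{1}(gK x') belast_map behead_map all_map.
  apply/allP => v v_int /=; rewrite mem_imset; last exact: can_inj fK.
  exact: (allP p_int).
Qed.

End Isomorphism.

Definition fiber (T1 T2 : finType) (X : {set T1 * T2}) (a : T1) : {set T2} :=
  [set h | (a, h) \in X].

Lemma card_fibers (T1 T2 : finType) (X : {set T1 * T2}) :
  #|X| = \sum_(a : T1) #|fiber X a|.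
Proof.
rewrite -sum1_card big_mkcond /=.
rewrite (eq_bigr (fun a => \sum_(h : T2) (if (a, h) \in X then 1 else 0))).
  by rewrite pair_bigA /=; apply: eq_bigr => [[a h]].
by move=> a _; rewrite -sum1_card big_mkcond; apply: eq_bigr => h _; rewrite inE.
Qed.

Section BoxFibers.
Variables (T1 T2 : finType) (e1 : rel T1) (e2 : rel T2).
Hypothesis irr1 : irreflexive e1.
Local Notation box := (box_rel e1 e2).

(* Dropping the G-steps of a walk of G □ H leaves an H-walk between the
   H-coordinates; it is as long as the original walk only if the original
   walk never leaves its starting layer. *)
Lemma box_walk_project (x : T1 * T2) (p : seq (T1 * T2)) : path box x p ->
  exists q, [/\ path e2 x.2 q, last x.2 q = (last x p).2, size q <= size p &
     (size q = size p -> all (fun z => z.1 == x.1) p)].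
Proof.
elim: p x => [|z p IH] x /=; first by move=> _; exists [::].
case/andP => /orP [] /andP [edge1 edge2] /IH [q [q_path q_last q_size q_eq]].
- exists (z.2 :: q); split => //=; first by rewrite edge2.
  by case=> /q_eq; rewrite (eqP edge1) eqxx.
- exists q; rewrite (eqP edge2); split => // [|size_eq]; first exact: leqW.
  by move: q_size; rewrite size_eq ltnn.
Qed.

Lemma box_walk_lift (a : T1) (h : T2) (r : seq T2) : path e2 h r ->
  path box (a, h) (map (pair a) r).
Proof.
elim: r h => [|z r IH] h //= /andP [edge r_path].
by rewrite /box_rel /= eqxx edge IH.
Qed.

(* A walk of G □ H inside one layer is an H-walk, since G has no loops. *)
Lemma box_walk_in_layer (x : T1 * T2) (p : seq (T1 * T2)) : path box x p ->
  all (fun z => z.1 == x.1) p -> path e2 x.2 (map snd p).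
Proof.
elim: p x => [|z p IH] x //= /andP [edge p_path] /andP [/eqP z1 in_layer].
rewrite IH ?andbT //; last by apply/allP => y y_p; rewrite z1; apply: (allP in_layer).
by case/orP: edge => /andP [edge1 edge2] //; rewrite z1 irr1 in edge1.
Qed.

Lemma fiber_total_mv (X : {set T1 * T2}) (a : T1) :
  total_mv_set box X -> total_mv_set e2 (fiber X a).
Proof.
move=> mvX h1 h2.
case: (mvX (a, h1) (a, h2)) => p [[/andP [p_path /eqP p_last] p_min] p_int].
have [q [q_path q_last q_size q_eq]] := box_walk_project p_path.
(* p is no longer than any H-walk, as H-walks lift to layer a ... *)
have p_min_H r : is_walk e2 h1 h2 r -> size p <= size r.
  move=> /andP [r_path /eqP r_last]; rewrite -(size_map (pair a) r); apply: p_min.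
  by rewrite /is_walk box_walk_lift //= last_map r_last.
(* ... so p cannot take a G-step, and stays in layer a. *)
have in_layer : all (fun z => z.1 == a) p.
  by apply: q_eq; apply/eqP; rewrite eqn_leq q_size p_min_H // /is_walk q_path q_last p_last /=.
exists (map snd p); split; [split|].
- by rewrite /is_walk -[h1]/((a, h1).2) last_map p_last box_walk_in_layer //=.
- by move=> r r_walk; rewrite size_map; apply: p_min_H.
- rewrite /internal -[h1]/((a, h1).2) belast_map behead_map all_map.
  apply/allP => z z_int /=; rewrite inE.
  have /eqP <- : z.1 == a.
    move: (mem_belast (mem_behead z_int)); rewrite inE => /orP [/eqP -> //|].
    exact: (allP in_layer).
  by rewrite -surjective_pairing; apply: (allP p_int).
Qed.

End BoxFibers.

Lemma Pset_common_nbr (T : finType) (e : rel T) (a : T) :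
  symmetric e -> a \in Pset e ->
  exists u w, [/\ u != w, ~~ e u w, e u a, e a w &
                  forall b, e u b -> e b w -> b = a].
Proof.
move=> sym; rewrite inE => /existsP [u] /existsP [w] /andP [uw /eqP capE].
have common x : ((x == u) || e u x) && ((x == w) || e w x) = (x == a).
  by move: (in_setI x (cnbhd e u) (cnbhd e w)); rewrite capE in_set1 !inE.
have nuw : ~~ e u w.
  apply/negP => euw; move: uw.
  have /eqP -> : w == a by rewrite -common euw eqxx orbT.
  have /eqP -> : u == a by rewrite -common eqxx (sym w) euw orbT.
  by rewrite eqxx.
have eua : e u a.
  move: (common a); rewrite eqxx => /andP [/orP [/eqP au|//] /orP [/eqP aw|ewa]].
    by rewrite -au aw eqxx in uw.
  by rewrite -au sym ewa in nuw.
have ewa : e w a.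
  move: (common a); rewrite eqxx => /andP [_ /orP [/eqP aw|//]].
  by rewrite -aw eua in nuw.
exists u, w; split=> // [|b eub ebw]; first by rewrite sym.
by apply/eqP; rewrite -common eub sym ebw !orbT.
Qed.

Section PVertexLayer.
Variables (T1 T2 : finType) (e1 : rel T1) (e2 : rel T2).
Variables (u w a : T1) (h : T2).
Hypotheses (uw : u != w) (nuw : ~~ e1 u w) (eua : e1 u a) (eaw : e1 a w).
Hypothesis unique_nbr : forall b, e1 u b -> e1 b w -> b = a.

Lemma box_geodesic_via (p : seq (T1 * T2)) :
  is_shortest (box_rel e1 e2) (u, h) (w, h) p -> internal (u, h) p = [:: (a, h)].
Proof.
case=> /andP [p_path /eqP p_last] p_min.
have : size p <= 2.
  by apply: (p_min [:: (a, h); (w, h)]); rewrite /is_walk /= /box_rel /= eua eaw !eqxx !orbT.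
case: p p_path p_last {p_min} => [|[b c] [|z [|]]] //=.
- by move=> _ [] /eqP; rewrite (negbTE uw).
- move=> /andP [edge _] [bE cE]; move: edge.
  by rewrite bE cE /box_rel /= (negbTE uw) (negbTE nuw).
- move=> /and3P [edge1 edge2 _] zE _; subst z; move: edge1 edge2; rewrite /box_rel /=.
  case/orP => /andP [ub hc]; case/orP => /andP [bw ch].
  + by move: uw; rewrite (eqP ub) (eqP bw) eqxx.
  + by move: nuw; rewrite (eqP ub) bw.
  + by move: nuw; rewrite -(eqP bw) ub.
  + by rewrite (unique_nbr ub bw) -(eqP hc).
Qed.

End PVertexLayer.

Lemma Pset_fiber_empty (T1 T2 : finType) (e1 : rel T1) (e2 : rel T2)
    (X : {set T1 * T2}) (a : T1) :
  symmetric e1 -> total_mv_set (box_rel e1 e2) X -> a \in Pset e1 ->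
  fiber X a = set0.
Proof.
move=> sym1 mvX /(Pset_common_nbr sym1) [u [w [uw nuw eua eaw unique_nbr]]].
apply/setP => h; rewrite !inE; apply/negbTE.
case: (mvX (u, h) (w, h)) => p [p_short p_int].
by move: p_int; rewrite (box_geodesic_via uw nuw eua eaw unique_nbr p_short) /= andbT.
Qed.

Lemma box_total_mv_bound (T1 T2 : finType) (e1 : rel T1) (e2 : rel T2)
    (X : {set T1 * T2}) :
  simple_graph e1 -> total_mv_set (box_rel e1 e2) X ->
  #|X| <= (#|T1| - #|Pset e1|) * mu_t e2.
Proof.
move=> [sym1 irr1] mvX.
rewrite card_fibers (bigID (mem (Pset e1))) /= big1 ?add0n; last first.
  by move=> a a_P; rewrite (Pset_fiber_empty sym1 mvX a_P) cards0.
apply: (@leq_trans (\sum_(a | a \notin Pset e1) mu_t e2)).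
  by apply: leq_sum => a _; apply/mu_t_ge/fiber_total_mv.
rewrite (eq_bigl (mem (~: Pset e1))) => [|a]; last by rewrite !inE.
by rewrite sum_nat_const cardsCs setCK.
Qed.

Lemma box_rel_swap (T1 T2 : finType) (e1 : rel T1) (e2 : rel T2) (x y : T1 * T2) :
  box_rel e2 e1 (x.2, x.1) (y.2, y.1) = box_rel e1 e2 x y.
Proof. by rewrite /box_rel /= orbC andbC [in X in _ || X]andbC. Qed.

Theorem theorem5p3 (T1 T2 : finType) (e1 : rel T1) (e2 : rel T2) :
  simple_graph e1 -> simple_graph e2 ->
  connected_graph e1 -> connected_graph e2 ->
  mu_t (box_rel e1 e2) <=
  minn ((#|T1| - #|Pset e1|) * mu_t e2) ((#|T2| - #|Pset e2|) * mu_t e1).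
Proof.
move=> simple1 simple2 _ _; rewrite leq_min; apply/andP; split; apply: mu_t_le => X mvX.
  exact: box_total_mv_bound.
pose swap (x : T1 * T2) := (x.2, x.1).
pose unswap (x : T2 * T1) := (x.2, x.1).
have swapK : cancel swap unswap by case.
have unswapK : cancel unswap swap by case.
rewrite -(card_imset _ (can_inj swapK)).
exact/box_total_mv_bound/(iso_total_mv swapK unswapK (@box_rel_swap _ _ e1 e2)).
Qed.
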